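(* There exists a sequence $\{b_n\}\subset\Lambda_{x,y}(\alpha)$ such that $\mu(\lambda,\theta,b_n)\to-\infty$ as $n\to\infty$, uniformly in $\theta\in[0,2\pi)$ and in $\lambda$ ranging over any bounded interval.
   Context: Fix $L_1,L_2>0$ and $\alpha>0$. $\Lambda_{x,y}(\alpha)$ is the set of $b\in C^1(\mathbb R^2)$ with $b\ge0$, $b(x+L_1,y)=b(x,y+L_2)=b(x,y)$, and $\int_0^{L_1}\int_0^{L_2}b\,dy\,dx=\alpha L_1L_2$. For $b\in\Lambda_{x,y}(\alpha)$, $\lambda\in\mathbb R$, and $\theta\in[0,2\pi)$, $\mu(\lambda,\theta,b)$ denotes the principal eigenvalue of $$-u_{xx}-u_{yy}+2\lambda\cos\theta\,u_x+2\lambda\sin\theta\,u_y-b(x,y)u=\mu u$$ under the periodicity conditions $u(x+L_1,y)=u(x,y+L_2)=u(x,y)$. *)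

From Stdlib Require Import Reals Lra.
Open Scope R_scope.

Definition cont2 (f : R -> R -> R) : Prop :=
  forall x0 y0 eps, 0 < eps -> exists d, 0 < d /\
    forall x y, Rabs (x - x0) < d -> Rabs (y - y0) < d ->
      Rabs (f x y - f x0 y0) < eps.

Definition partial_x (f fx : R -> R -> R) : Prop :=
  forall x y, derivable_pt_lim (fun t => f t y) x (fx x y).
Definition partial_y (f fy : R -> R -> R) : Prop :=
  forall x y, derivable_pt_lim (fun t => f x t) y (fy x y).

Definition C1_2 (f : R -> R -> R) : Prop :=
  cont2 f /\ exists fx fy, partial_x f fx /\ partial_y f fy /\ cont2 fx /\ cont2 fy.

Definition periodic2 (L1 L2 : R) (f : R -> R -> R) : Prop :=
  forall x y, f (x + L1) y = f x y /\ f x (y + L2) = f x y.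

Definition int_eq (f : R -> R) (a b v : R) : Prop :=
  exists pr : Riemann_integrable f a b, RiemannInt pr = v.

Definition in_Lambda (L1 L2 alpha : R) (b : R -> R -> R) : Prop :=
  C1_2 b /\ (forall x y, 0 <= b x y) /\ periodic2 L1 L2 b /\
  exists g : R -> R,
    (forall x, int_eq (fun y => b x y) 0 L2 (g x)) /\
    int_eq g 0 L1 (alpha * L1 * L2).

(* mu is the principal eigenvalue of
   -u_xx - u_yy + 2 lam cos th u_x + 2 lam sin th u_y - b u = mu u
   with (L1,L2)-periodic conditions: there is a positive periodic C^2
   eigenfunction (the principal eigenvalue is the unique eigenvalue with a
   positive eigenfunction). *)
Definition is_principal_eig (L1 L2 lam th : R) (b : R -> R -> R) (mu : R) : Prop :=
  exists u ux uy uxx uxy uyx uyy : R -> R -> R,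
    partial_x u ux /\ partial_y u uy /\
    partial_x ux uxx /\ partial_y ux uxy /\
    partial_x uy uyx /\ partial_y uy uyy /\
    cont2 u /\ cont2 ux /\ cont2 uy /\ cont2 uxx /\ cont2 uxy /\
    cont2 uyx /\ cont2 uyy /\
    periodic2 L1 L2 u /\ (forall x y, 0 < u x y) /\
    forall x y,
      - uxx x y - uyy x y + 2 * lam * cos th * ux x y
      + 2 * lam * sin th * uy x y - b x y * u x y = mu * u x y.

(* The potentials [b_N(x, y) = c_N cos^(2N)(PI x / L1) cos^(2N)(PI y / L2)] have mean [alpha].
   A period of [cos^(2N)] carries mass at most [L / sqrt N], so [c_N >= alpha N] and
   [b_N >= alpha N / 4] on a disc of radius of order [1 / sqrt N] around the origin.

   Let [u > 0] be a periodic eigenfunction for [mu], and [Phi] a positive decreasing profile: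
   linear on [[0, w0]], [- ln w / 2 + w / 2] on [[w0, 1/4]], exponentially decaying beyond.
   With [Om] of order [N], take the largest [t] with [t Phi(Om |z|^2) <= u].  At a touching
   point the maximum principle gives [mu u <= L (t Phi(Om |z|^2))], and every piece of the
   profile is a supersolution with rate [theta Om]: on the disc thanks to the size of [b_N],
   outside it because [- ln] is the planar fundamental solution and the tail decays fast; the
   drift, with [|lambda|] bounded, is absorbed once [Om] is large.  So [mu <= - theta Om]. *)

From Stdlib Require Import Reals Lra Lia Psatz ZArith Classical ClassicalEpsilon Rtopology.
Open Scope R_scope.

Lemma Rabs_minus_self_lt d x : 0 < d -> Rabs (x - x) < d.
Proof. intros; unfold Rminus; rewrite Rplus_opp_r, Rabs_R0; auto. Qed.

Lemma continuity_pt_eps f x0 :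
  continuity_pt f x0 <->
  forall eps, 0 < eps -> exists d, 0 < d /\
    forall x, Rabs (x - x0) < d -> Rabs (f x - f x0) < eps.
Proof.
  split.
  - intros Hf eps He.
    destruct (Hf eps He) as [d [Hd Hf']].
    exists d; split; auto; intros x Hx.
    destruct (Req_dec x x0) as [->|Hne]; [now apply Rabs_minus_self_lt|].
    apply Hf'; repeat split; auto.
  - intros H eps He.
    destruct (H eps He) as [d [Hd H1]].
    exists d; split; auto; intros x [_ Hx]; apply H1, Hx.
Qed.

Lemma cont2_const c : cont2 (fun _ _ => c).
Proof.
  intros x0 y0 eps He; exists 1; split; [lra|]; intros.
  now apply Rabs_minus_self_lt.
Qed.

Lemma cont2_fst f : (forall x, continuity_pt f x) -> cont2 (fun x _ => f x).
Proof.
  intros Hf x0 y0 eps He.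
  destruct (proj1 (continuity_pt_eps f x0) (Hf x0) eps He) as [d [Hd H]].
  exists d; split; auto.
Qed.

Lemma cont2_snd f : (forall y, continuity_pt f y) -> cont2 (fun _ y => f y).
Proof.
  intros Hf x0 y0 eps He.
  destruct (proj1 (continuity_pt_eps f y0) (Hf y0) eps He) as [d [Hd H]].
  exists d; split; auto.
Qed.

Lemma cont2_plus f g : cont2 f -> cont2 g -> cont2 (fun x y => f x y + g x y).
Proof.
  intros Hf Hg x0 y0 eps He.
  destruct (Hf x0 y0 (eps / 2)) as [d1 [Hd1 H1]]; [lra|].
  destruct (Hg x0 y0 (eps / 2)) as [d2 [Hd2 H2]]; [lra|].
  exists (Rmin d1 d2); split; [now apply Rmin_pos|].
  intros x y Hx Hy.
  pose proof (Rmin_l d1 d2); pose proof (Rmin_r d1 d2).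
  specialize (H1 x y ltac:(lra) ltac:(lra)); specialize (H2 x y ltac:(lra) ltac:(lra)).
  replace (f x y + g x y - (f x0 y0 + g x0 y0))
    with ((f x y - f x0 y0) + (g x y - g x0 y0)) by ring.
  eapply Rle_lt_trans; [apply Rabs_triang|lra].
Qed.

Lemma cont2_comp (f : R -> R) g :
  cont2 g -> (forall x y, continuity_pt f (g x y)) -> cont2 (fun x y => f (g x y)).
Proof.
  intros Hg Hf x0 y0 eps He.
  destruct (proj1 (continuity_pt_eps f _) (Hf x0 y0) eps He) as [d1 [Hd1 H1]].
  destruct (Hg x0 y0 d1 Hd1) as [d2 [Hd2 H2]].
  exists d2; split; auto.
Qed.

Lemma cont2_ext f g : (forall x y, f x y = g x y) -> cont2 f -> cont2 g.
Proof.
  intros E Hf x0 y0 eps He; destruct (Hf x0 y0 eps He) as [d [Hd H]].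
  exists d; split; auto; intros; rewrite <- !E; auto.
Qed.

Lemma cont2_mult f g : cont2 f -> cont2 g -> cont2 (fun x y => f x y * g x y).
Proof.
  intros Hf Hg.
  (* polarization reduces products to squares of sums *)
  apply cont2_ext with (fun x y => / 4 * ((f x y + g x y) * (f x y + g x y))
                                 - / 4 * ((f x y - g x y) * (f x y - g x y))).
  { intros; field. }
  assert (Hsq : forall h, cont2 h -> cont2 (fun x y => / 4 * (h x y * h x y))).
  { intros h Hh; apply (cont2_comp (fun z => / 4 * (z * z))); auto; intros; reg. }
  assert (Hopp : forall h, cont2 h -> cont2 (fun x y => - h x y)).
  { intros h Hh; apply (cont2_comp (fun z => - z)); auto; intros; reg. }
  apply cont2_plus; [|apply Hopp]; apply Hsq; apply cont2_plus; auto.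
Qed.

Lemma cont2_inv f : cont2 f -> (forall x y, f x y <> 0) -> cont2 (fun x y => / f x y).
Proof.
  intros Hf Hn; apply (cont2_comp Rinv); auto; intros x y.
  apply (continuity_pt_inv (fun z => z)); [reg|auto].
Qed.

Lemma cont2_radial Om : cont2 (fun x y => Om * (x * x + y * y)).
Proof.
  apply (cont2_comp (fun z => Om * z)); [|intros; reg].
  apply cont2_plus; [apply (cont2_fst (fun x => x * x))|apply (cont2_snd (fun y => y * y))];
    intros; reg.
Qed.

Lemma cont2_slice_y F x y : cont2 F -> continuity_pt (fun y => F x y) y.
Proof.
  intros HF; apply continuity_pt_eps; intros eps He.
  destruct (HF x y eps He) as [d [Hd H]]; exists d; split; auto.
  intros y' Hy; apply H; auto; now apply Rabs_minus_self_lt.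
Qed.

(* By contradiction and Bolzano-Weierstrass on the y-coordinates. *)
Lemma cont2_unif_y F a b x0 eps : cont2 F -> a <= b -> 0 < eps ->
  exists d, 0 < d /\ forall x y, a <= y <= b -> Rabs (x - x0) < d ->
    Rabs (F x y - F x0 y) < eps.
Proof.
  intros HF Hab He; apply NNPP; intro Hn.
  assert (Hs : forall n : nat, exists xy : R * R,
             a <= snd xy <= b /\ Rabs (fst xy - x0) < / (INR n + 1) /\
             eps <= Rabs (F (fst xy) (snd xy) - F x0 (snd xy))).
  { intro n; apply NNPP; intro Hc; apply Hn; exists (/ (INR n + 1)); split.
    - apply Rinv_0_lt_compat; pose proof (pos_INR n); lra.
    - intros x y Hy Hx; apply Rnot_le_lt; intro Hle; apply Hc; exists (x, y); auto. }
  destruct (choice _ Hs) as [s Hsp].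
  destruct (Bolzano_Weierstrass (fun n => snd (s n)) (fun c => a <= c <= b)
              (compact_P3 a b)) as [l Hl].
  { intro n; apply (Hsp n). }
  destruct (HF x0 l (eps / 2)) as [d [Hd Hc]]; [lra|].
  destruct (archimed (/ d)) as [Hup _].
  assert (Hz : (0 <= up (/ d))%Z).
  { apply le_IZR; pose proof (Rinv_0_lt_compat d Hd); simpl; lra. }
  destruct (Hl (disc l (mkposreal d Hd)) (Z.to_nat (up (/ d)))) as [p [Hp Hv]].
  { exists (mkposreal d Hd); intros z Hz'; auto. }
  unfold disc in Hv; simpl in Hv.
  destruct (Hsp p) as [Hy [Hx Hf]].
  assert (Hpd : / (INR p + 1) < d).
  { apply le_INR in Hp; rewrite INR_IZR_INZ, Z2Nat.id in Hp by auto.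
    rewrite <- (Rinv_inv d); apply Rinv_lt_contravar.
    - apply Rmult_lt_0_compat; [now apply Rinv_0_lt_compat|pose proof (pos_INR p); lra].
    - lra. }
  pose proof (Hc (fst (s p)) (snd (s p)) ltac:(lra) Hv) as A1.
  pose proof (Hc x0 (snd (s p)) (Rabs_minus_self_lt d x0 Hd) Hv) as A2.
  assert (Rabs (F (fst (s p)) (snd (s p)) - F x0 (snd (s p))) < eps); [|lra].
  replace (F (fst (s p)) (snd (s p)) - F x0 (snd (s p)))
    with ((F (fst (s p)) (snd (s p)) - F x0 l) - (F x0 (snd (s p)) - F x0 l)) by ring.
  eapply Rle_lt_trans; [apply Rabs_triang|]; rewrite Rabs_Ropp; lra.
Qed.

Lemma cont2_attains_min_rect F a1 b1 a2 b2 : cont2 F -> a1 <= b1 -> a2 <= b2 ->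
  exists p1 p2, a1 <= p1 <= b1 /\ a2 <= p2 <= b2 /\
    forall x y, a1 <= x <= b1 -> a2 <= y <= b2 -> F p1 p2 <= F x y.
Proof.
  intros HF H1 H2.
  assert (Hm : forall x, exists y, a2 <= y <= b2 /\
                 forall y', a2 <= y' <= b2 -> F x y <= F x y').
  { intro x; destruct (continuity_ab_min (fun y => F x y) a2 b2 H2) as [m Hm].
    - intros; now apply cont2_slice_y.
    - now exists m. }
  destruct (choice _ Hm) as [ym Hym].
  (* the minimum over the slice, x |-> F x (ym x), is continuous by uniformity in y *)
  assert (Hg : forall x0, continuity_pt (fun x => F x (ym x)) x0).
  { intro x0; apply continuity_pt_eps; intros eps He.
    destruct (cont2_unif_y F a2 b2 x0 eps HF H2 He) as [d [Hd Hu]].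
    exists d; split; auto; intros x Hx.
    destruct (Hym x) as [Hx1 Hx2]; destruct (Hym x0) as [Hx01 Hx02].
    pose proof (Hu x (ym x) Hx1 Hx) as B1; pose proof (Hu x (ym x0) Hx01 Hx) as B2.
    pose proof (Hx2 (ym x0) Hx01); pose proof (Hx02 (ym x) Hx1).
    apply Rabs_def1; apply Rabs_def2 in B1; apply Rabs_def2 in B2; lra. }
  destruct (continuity_ab_min (fun x => F x (ym x)) a1 b1 H1) as [x1 [Hmin Hx1]];
    [intros; apply Hg|].
  exists x1, (ym x1); split; [|split]; auto; [apply Hym|].
  intros x y Hx Hy; apply Rle_trans with (F x (ym x)); [now apply Hmin|].
  now apply (proj2 (Hym x)).
Qed.

Lemma dlim_eq f x l l' : derivable_pt_lim f x l -> l = l' -> derivable_pt_lim f x l'.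
Proof. now intros ? <-. Qed.

Lemma dlim_plus f g x l1 l2 : derivable_pt_lim f x l1 -> derivable_pt_lim g x l2 ->
  derivable_pt_lim (fun y => f y + g y) x (l1 + l2).
Proof. apply (derivable_pt_lim_plus f g). Qed.

Lemma dlim_minus f g x l1 l2 : derivable_pt_lim f x l1 -> derivable_pt_lim g x l2 ->
  derivable_pt_lim (fun y => f y - g y) x (l1 - l2).
Proof. apply (derivable_pt_lim_minus f g). Qed.

Lemma dlim_mult f g x l1 l2 : derivable_pt_lim f x l1 -> derivable_pt_lim g x l2 ->
  derivable_pt_lim (fun y => f y * g y) x (l1 * g x + f x * l2).
Proof. apply (derivable_pt_lim_mult f g). Qed.

Lemma dlim_comp f g x l1 l2 : derivable_pt_lim g x l1 -> derivable_pt_lim f (g x) l2 ->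
  derivable_pt_lim (fun y => f (g y)) x (l2 * l1).
Proof. apply (derivable_pt_lim_comp g f). Qed.

Lemma dlim_scal c f x l : derivable_pt_lim f x l ->
  derivable_pt_lim (fun y => c * f y) x (c * l).
Proof.
  intros H; apply dlim_eq with (0 * f x + c * l); [|ring].
  apply (dlim_mult (fun _ => c) f); [apply derivable_pt_lim_const|auto].
Qed.

Lemma dlim_affine a c x : derivable_pt_lim (fun y => a * y + c) x a.
Proof.
  apply dlim_eq with (a * 1 + 0); [|ring].
  apply dlim_plus; [apply dlim_scal, derivable_pt_lim_id|apply derivable_pt_lim_const].
Qed.

Lemma local_min_deriv_eq0 g x0 l del : 0 < del ->
  (forall x, Rabs (x - x0) < del -> g x0 <= g x) ->
  derivable_pt_lim g x0 l -> l = 0.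
Proof.
  intros Hdel Hmin Hd.
  rewrite <- (derive_pt_eq_0 g x0 l (exist _ l Hd) Hd).
  apply deriv_minimum with (x0 - del) (x0 + del); try lra.
  intros x H1 H2; apply Hmin, Rabs_def1; lra.
Qed.

Lemma local_min_deriv2_ge0 g g1 x0 d2 del : 0 < del ->
  (forall x, Rabs (x - x0) < del -> g x0 <= g x) ->
  (forall x, Rabs (x - x0) < del -> derivable_pt_lim g x (g1 x)) ->
  derivable_pt_lim g1 x0 d2 -> g1 x0 = 0 /\ 0 <= d2.
Proof.
  intros Hdel Hmin Hd Hd2.
  assert (E : g1 x0 = 0).
  { apply (local_min_deriv_eq0 g x0 _ del); auto.
    apply Hd, Rabs_minus_self_lt, Hdel. }
  split; auto; apply Rnot_lt_le; intro Hl.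
  destruct (Hd2 (- d2 / 2)) as [dl Hdl]; [lra|].
  set (h := Rmin del dl / 2).
  assert (Hm : 0 < Rmin del dl) by (apply Rmin_pos; pose proof (cond_pos dl); lra).
  pose proof (Rmin_l del dl); pose proof (Rmin_r del dl).
  assert (Hh : 0 < h /\ h < del /\ h < dl) by (unfold h; lra).
  destruct (MVT_cor2 g g1 x0 (x0 + h)) as [c [Hc Hcr]]; [lra| |].
  { intros c Hc; apply Hd; rewrite Rabs_right; lra. }
  (* g1 is negative just right of x0, so g decreases there *)
  assert (Hneg : g1 c < 0).
  { pose proof (Hdl (c - x0) ltac:(lra) ltac:(rewrite Rabs_right; lra)) as A.
    replace (x0 + (c - x0)) with c in A by ring; rewrite E in A.
    apply Rabs_def2 in A; destruct A as [A1 A2].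
    replace (g1 c) with ((g1 c - 0) / (c - x0) * (c - x0)) by (field; lra).
    apply Rmult_neg_pos; lra. }
  assert (g x0 <= g (x0 + h))
    by (apply Hmin; replace (x0 + h - x0) with h by ring; rewrite Rabs_right; lra).
  assert (g1 c * (x0 + h - x0) < 0) by (apply Rmult_neg_pos; lra).
  lra.
Qed.

Lemma dlim_radial_coord Om c s :
  derivable_pt_lim (fun s => Om * (s * s + c)) s (2 * Om * s).
Proof.
  apply dlim_eq with (Om * ((1 * s + s * 1) + 0)); [|ring].
  apply dlim_scal, dlim_plus; [|apply derivable_pt_lim_const].
  apply (dlim_mult (fun y => y) (fun y => y)); apply derivable_pt_lim_id.
Qed.

Lemma dlim_radial (G G1 : R -> R) a b Om c s :
  a < Om * (s * s + c) < b ->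
  (forall w, a < w < b -> derivable_pt_lim G w (G1 w)) ->
  derivable_pt_lim (fun s => G (Om * (s * s + c))) s
    (G1 (Om * (s * s + c)) * (2 * Om * s)).
Proof. intros; apply dlim_comp; [apply dlim_radial_coord|auto]. Qed.

Lemma dlim_radial2 (G1 G2 : R -> R) a b Om c s :
  a < Om * (s * s + c) < b ->
  (forall w, a < w < b -> derivable_pt_lim G1 w (G2 w)) ->
  derivable_pt_lim (fun s => G1 (Om * (s * s + c)) * (2 * Om * s)) s
    (G2 (Om * (s * s + c)) * (2 * Om * s) * (2 * Om * s)
     + G1 (Om * (s * s + c)) * (2 * Om)).
Proof.
  intros.
  apply dlim_eq with (G2 (Om * (s * s + c)) * (2 * Om * s) * (2 * Om * s)
                      + G1 (Om * (s * s + c)) * (2 * Om * 1)); [|ring].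
  apply (dlim_mult (fun s => G1 (Om * (s * s + c))) (fun s => 2 * Om * s)).
  - now apply dlim_radial with a b.
  - apply dlim_scal, derivable_pt_lim_id.
Qed.

Lemma continuity_pt_if (g h : R -> R) a x :
  (x <= a -> continuity_pt g x) -> (a <= x -> continuity_pt h x) ->
  (x = a -> g a = h a) ->
  continuity_pt (fun z => if Rle_dec z a then g z else h z) x.
Proof.
  intros Hg Hh Ha.
  destruct (Rtotal_order x a) as [Hlt|[->|Hgt]].
  - apply continuity_pt_locally_ext with g (a - x); [lra| |apply Hg; lra].
    intros y Hy; unfold Rdist in Hy; apply Rabs_def2 in Hy.
    destruct (Rle_dec y a); [auto|lra].
  - specialize (Ha eq_refl).
    apply continuity_pt_eps; intros eps He.
    destruct (proj1 (continuity_pt_eps g a) (Hg (Rle_refl a)) eps He) as [d1 [Hd1 H1]].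
    destruct (proj1 (continuity_pt_eps h a) (Hh (Rle_refl a)) eps He) as [d2 [Hd2 H2]].
    exists (Rmin d1 d2); split; [now apply Rmin_pos|intros y Hy].
    pose proof (Rmin_l d1 d2); pose proof (Rmin_r d1 d2).
    destruct (Rle_dec a a) as [_|]; [|lra].
    destruct (Rle_dec y a); [apply H1; lra|rewrite Ha; apply H2; lra].
  - apply continuity_pt_locally_ext with h (x - a); [lra| |apply Hh; lra].
    intros y Hy; unfold Rdist in Hy; apply Rabs_def2 in Hy.
    destruct (Rle_dec y a); [lra|auto].
Qed.

Lemma ln_le_sub1 x : 0 < x -> ln x <= x - 1.
Proof. intros Hx; pose proof (exp_ineq1_le (ln x)); rewrite exp_ln in H; lra. Qed.

Lemma ln_ge_1_sub_inv x : 0 < x -> 1 - / x <= ln x.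
Proof.
  intros Hx; pose proof (ln_le_sub1 (/ x) (Rinv_0_lt_compat x Hx)).
  rewrite ln_Rinv in H; lra.
Qed.

Lemma ln_div a b : 0 < a -> 0 < b -> ln (b / a) = ln b - ln a.
Proof.
  intros; unfold Rdiv; rewrite ln_mult, ln_Rinv; try lra.
  now apply Rinv_0_lt_compat.
Qed.

(* [prof_log] is the planar fundamental solution [- ln w / 2] plus [w / 2], so that
   [w prof_log'' + prof_log' = 1 / 2]; it is glued at [w = 1/4] to an exponential
   tail and capped near [0] by a steep linear piece. *)
Definition prof_log w := - ln 2 - / 2 * ln w + w / 2.
Definition prof_log1 w := - / (2 * w) + / 2.
Definition prof_log2 w := / (2 * (w * w)).
Definition prof_exp w := exp (2 - 8 * w) / 8.
Definition prof_lin w0 w := prof_log w0 + 1 - w / w0.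
Definition profile w0 w :=
  if Rle_dec w w0 then prof_lin w0 w
  else if Rle_dec w (/ 4) then prof_log w else prof_exp w.

Lemma prof_log_quarter : prof_log (/ 4) = / 8.
Proof.
  unfold prof_log; rewrite ln_Rinv by lra; replace 4 with (2 * 2) by ring.
  rewrite ln_mult by lra; field.
Qed.

Lemma prof_exp_quarter : prof_exp (/ 4) = / 8.
Proof.
  unfold prof_exp; replace (2 - 8 * / 4) with 0 by field; rewrite exp_0; field.
Qed.

Lemma prof_exp_pos w : 0 < prof_exp w.
Proof. unfold prof_exp; pose proof (exp_pos (2 - 8 * w)); lra. Qed.

Lemma prof_log_decr a b : 0 < a -> a <= b -> b <= 1 -> prof_log b <= prof_log a.
Proof.
  intros Ha Hab Hb; unfold prof_log.
  pose proof (ln_ge_1_sub_inv (b / a) ltac:(apply Rdiv_lt_0_compat; lra)) as H.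
  rewrite ln_div in H by lra.
  replace (1 - / (b / a)) with ((b - a) / b) in H by (field; lra).
  assert ((b - a) / b >= b - a).
  { apply Rle_ge, Rmult_le_reg_r with b; [lra|].
    unfold Rdiv; rewrite Rmult_assoc, Rinv_l by lra; nra. }
  lra.
Qed.

Lemma prof_exp_decr a b : a <= b -> prof_exp b <= prof_exp a.
Proof.
  intros H; unfold prof_exp; destruct (Req_dec a b) as [->|Hn]; [lra|].
  assert (exp (2 - 8 * b) < exp (2 - 8 * a)) by (apply exp_increasing; lra); lra.
Qed.

Lemma prof_lin_le_log w0 w : 0 < w0 -> w0 <= w -> prof_lin w0 w <= prof_log w.
Proof.
  intros H0 H; unfold prof_lin, prof_log.
  pose proof (ln_le_sub1 (w / w0) ltac:(apply Rdiv_lt_0_compat; lra)) as A.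
  rewrite ln_div in A by lra.
  replace (w / w0 - 1) with ((w - w0) / w0) in A by (field; lra).
  assert (B : (w - w0) / w0 >= 0).
  { apply Rle_ge; unfold Rdiv; apply Rmult_le_pos; [lra|].
    left; now apply Rinv_0_lt_compat. }
  replace (w / w0) with (1 + (w - w0) / w0) by (field; lra); lra.
Qed.

Lemma prof_log_le_exp w : / 4 <= w <= / 3 -> prof_log w <= prof_exp w.
Proof.
  intros [H1 H2]; unfold prof_log, prof_exp.
  pose proof (ln_ge_1_sub_inv (w / (/ 4)) ltac:(apply Rdiv_lt_0_compat; lra)) as A.
  rewrite ln_div, ln_Rinv in A by lra.
  replace 4 with (2 * 2) in A by ring; rewrite ln_mult in A by lra.
  replace (/ (w / / (2 * 2))) with (/ (4 * w)) in A by (field; lra).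
  pose proof (exp_ineq1_le (2 - 8 * w)).
  assert (C : / (4 * w) * (4 * w) = 1) by (field; lra).
  assert (/ (4 * w) <= 7 / 4 - 3 * w).
  { apply Rmult_le_reg_r with (4 * w); [lra|]; rewrite C; nra. }
  lra.
Qed.

Lemma dlim_prof_log w : 0 < w -> derivable_pt_lim prof_log w (prof_log1 w).
Proof.
  intros Hw.
  apply derivable_pt_lim_ext with (fun x => (- ln 2 + (- / 2) * ln x) + / 2 * x).
  { intro z; unfold prof_log; field. }
  apply dlim_eq with ((0 + - / 2 * / w) + / 2 * 1); [|unfold prof_log1; field; lra].
  apply dlim_plus; [apply dlim_plus|apply dlim_scal, derivable_pt_lim_id].
  - apply derivable_pt_lim_const.
  - apply dlim_scal, derivable_pt_lim_ln, Hw.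
Qed.

Lemma dlim_prof_log1 w : 0 < w -> derivable_pt_lim prof_log1 w (prof_log2 w).
Proof.
  intros Hw.
  apply derivable_pt_lim_locally_ext with (fun x => (- / 2) * / x + / 2) 0 (w + 1);
    [lra|intros z Hz; unfold prof_log1; field; lra|].
  apply dlim_eq with (- / 2 * (- / (w * w)) + 0); [|unfold prof_log2; field; lra].
  apply dlim_plus; [apply dlim_scal|apply derivable_pt_lim_const].
  apply derivable_pt_lim_ext with (div_fct (fun _ => 1) (fun x => x));
    [intro; unfold div_fct, Rdiv; ring|].
  apply dlim_eq with ((0 * w - 1 * 1) / Rsqr w); [|unfold Rsqr; field; lra].
  apply derivable_pt_lim_div;
    [apply derivable_pt_lim_const|apply derivable_pt_lim_id|lra].
Qed.

Lemma dlim_prof_exp w : derivable_pt_lim prof_exp w (- 8 * prof_exp w).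
Proof.
  apply derivable_pt_lim_ext with (fun x => / 8 * exp (- 8 * x + 2)).
  { intro x; unfold prof_exp; replace (- 8 * x + 2) with (2 - 8 * x) by ring; field. }
  apply dlim_eq with (/ 8 * (exp (- 8 * w + 2) * - 8));
    [|unfold prof_exp; replace (- 8 * w + 2) with (2 - 8 * w) by ring; field].
  apply dlim_scal, (dlim_comp exp (fun x => - 8 * x + 2));
    [apply dlim_affine|apply derivable_pt_lim_exp].
Qed.

Lemma dlim_prof_exp1 w :
  derivable_pt_lim (fun w => - 8 * prof_exp w) w (64 * prof_exp w).
Proof.
  apply dlim_eq with (- 8 * (- 8 * prof_exp w)); [apply dlim_scal, dlim_prof_exp|ring].
Qed.

Lemma dlim_prof_lin w0 w : 0 < w0 -> derivable_pt_lim (prof_lin w0) w (- / w0).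
Proof.
  intros H; apply derivable_pt_lim_ext with (fun x => (- / w0) * x + (prof_log w0 + 1));
    [intro; unfold prof_lin; field; lra|apply dlim_affine].
Qed.

Section Profile.

Variable w0 : R.
Hypothesis Hw0 : 0 < w0 <= / 8.

Lemma prof_log_w0_ge : / 8 <= prof_log w0.
Proof. rewrite <- prof_log_quarter; apply prof_log_decr; lra. Qed.

Lemma profile_pos w : 0 < profile w0 w.
Proof.
  pose proof prof_log_w0_ge; unfold profile.
  destruct (Rle_dec w w0); [|destruct (Rle_dec w (/ 4))].
  - unfold prof_lin; assert (w / w0 <= 1); [|lra].
    apply Rmult_le_reg_r with w0; [lra|].
    unfold Rdiv; rewrite Rmult_assoc, Rinv_l by lra; lra.
  - pose proof (prof_log_decr w (/ 4) ltac:(lra) ltac:(lra) ltac:(lra)).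
    rewrite prof_log_quarter in H0; lra.
  - apply prof_exp_pos.
Qed.

Lemma profile_decr a b : a <= b -> profile w0 b <= profile w0 a.
Proof.
  intros Hab; pose proof prof_log_w0_ge; pose proof prof_log_quarter;
    pose proof prof_exp_quarter; unfold profile.
  assert (Hlin : forall w, w <= w0 -> prof_log w0 <= prof_lin w0 w).
  { intros w Hw; unfold prof_lin; assert (w / w0 <= 1); [|lra].
    apply Rmult_le_reg_r with w0; [lra|].
    unfold Rdiv; rewrite Rmult_assoc, Rinv_l by lra; lra. }
  destruct (Rle_dec a w0); destruct (Rle_dec b w0); try lra.
  - unfold prof_lin, Rdiv; assert (a * / w0 <= b * / w0); [|lra].
    apply Rmult_le_compat_r; auto; left; apply Rinv_0_lt_compat; lra.
  - specialize (Hlin a r).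
    destruct (Rle_dec b (/ 4)).
    + pose proof (prof_log_decr w0 b ltac:(lra) ltac:(lra) ltac:(lra)); lra.
    + pose proof (prof_exp_decr (/ 4) b ltac:(lra)); lra.
  - destruct (Rle_dec a (/ 4)); destruct (Rle_dec b (/ 4)); try lra.
    + apply prof_log_decr; lra.
    + pose proof (prof_exp_decr (/ 4) b ltac:(lra));
        pose proof (prof_log_decr a (/ 4) ltac:(lra) ltac:(lra) ltac:(lra)); lra.
    + now apply prof_exp_decr.
Qed.

Lemma profile_continuous w : continuity_pt (profile w0) w.
Proof.
  assert (Hlog : forall z, 0 < z -> continuity_pt prof_log z).
  { intros z Hz; exact (derivable_continuous_pt _ _ (exist _ _ (dlim_prof_log z Hz))). }
  assert (Hexp : forall z, continuity_pt prof_exp z).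
  { intro z; exact (derivable_continuous_pt _ _ (exist _ _ (dlim_prof_exp z))). }
  apply continuity_pt_if.
  - intros; exact (derivable_continuous_pt _ _ (exist _ _ (dlim_prof_lin w0 w ltac:(lra)))).
  - intros; apply continuity_pt_if; auto; [intros; apply Hlog; lra|].
    intros ->; now rewrite prof_log_quarter, prof_exp_quarter.
  - intros _; destruct (Rle_dec w0 (/ 4)); [|lra].
    unfold prof_lin; field; lra.
Qed.

End Profile.

Section Contact.

Variables (P P1 P2 : R -> R) (a b Om t : R).
Hypothesis HP : forall w, a < w < b -> derivable_pt_lim P w (P1 w).
Hypothesis HP1 : forall w, a < w < b -> derivable_pt_lim P1 w (P2 w).

Lemma radial_contact_x (u ux uxx : R -> R -> R) p1 p2 del :
  partial_x u ux -> partial_x ux uxx -> 0 < del ->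
  (forall x y, Rabs (x - p1) < del -> Rabs (y - p2) < del ->
     a < Om * (x * x + y * y) < b /\ t * P (Om * (x * x + y * y)) <= u x y) ->
  u p1 p2 = t * P (Om * (p1 * p1 + p2 * p2)) ->
  ux p1 p2 = t * (P1 (Om * (p1 * p1 + p2 * p2)) * (2 * Om * p1)) /\
  t * (P2 (Om * (p1 * p1 + p2 * p2)) * (2 * Om * p1) * (2 * Om * p1)
       + P1 (Om * (p1 * p1 + p2 * p2)) * (2 * Om)) <= uxx p1 p2.
Proof.
  intros Hux Huxx Hdel Hnear Heq.
  pose proof (Rabs_minus_self_lt del p2 Hdel) as Hp2.
  pose proof (Rabs_minus_self_lt del p1 Hdel) as Hp1.
  destruct (local_min_deriv2_ge0 (fun s => u s p2 - t * P (Om * (s * s + p2 * p2)))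
     (fun s => ux s p2 - t * (P1 (Om * (s * s + p2 * p2)) * (2 * Om * s))) p1
     (uxx p1 p2 - t * (P2 (Om * (p1 * p1 + p2 * p2)) * (2 * Om * p1) * (2 * Om * p1)
                       + P1 (Om * (p1 * p1 + p2 * p2)) * (2 * Om))) del Hdel);
    [| | |lra].
  - intros x Hx; pose proof (proj2 (Hnear x p2 Hx Hp2)); lra.
  - intros x Hx; apply dlim_minus; [apply Hux|apply dlim_scal].
    apply dlim_radial with a b; [apply (Hnear x p2 Hx Hp2)|auto].
  - apply dlim_minus; [apply Huxx|apply dlim_scal].
    apply dlim_radial2 with a b; [apply (Hnear p1 p2 Hp1 Hp2)|auto].
Qed.

Lemma radial_contact_y (u uy uyy : R -> R -> R) p1 p2 del :
  partial_y u uy -> partial_y uy uyy -> 0 < del ->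
  (forall x y, Rabs (x - p1) < del -> Rabs (y - p2) < del ->
     a < Om * (x * x + y * y) < b /\ t * P (Om * (x * x + y * y)) <= u x y) ->
  u p1 p2 = t * P (Om * (p1 * p1 + p2 * p2)) ->
  uy p1 p2 = t * (P1 (Om * (p1 * p1 + p2 * p2)) * (2 * Om * p2)) /\
  t * (P2 (Om * (p1 * p1 + p2 * p2)) * (2 * Om * p2) * (2 * Om * p2)
       + P1 (Om * (p1 * p1 + p2 * p2)) * (2 * Om)) <= uyy p1 p2.
Proof.
  intros Huy Huyy Hdel Hnear Heq.
  rewrite (Rplus_comm (p1 * p1)) in *.
  apply (radial_contact_x (fun x y => u y x) (fun x y => uy y x) (fun x y => uyy y x)
           p2 p1 del (fun x y => Huy y x) (fun x y => Huyy y x) Hdel); auto.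
  intros x y Hx Hy; rewrite Rplus_comm; now apply Hnear.
Qed.

End Contact.

(* The operator of the eigenproblem applied to [G (Om (x^2 + y^2))] at [(p1, p2)],
   where [g0], [g1], [g2] are the values of [G], [G'], [G''] at [Om (p1^2 + p2^2)]. *)
Definition radial_op Om lam th bv g0 g1 g2 p1 p2 :=
  - (g2 * (2 * Om * p1) * (2 * Om * p1) + g1 * (2 * Om))
  - (g2 * (2 * Om * p2) * (2 * Om * p2) + g1 * (2 * Om))
  + 2 * lam * cos th * (g1 * (2 * Om * p1)) + 2 * lam * sin th * (g1 * (2 * Om * p2))
  - bv * g0.

(* Touching [u] from below by [t Ph(Om r^2)] at a point where [Ph] is smooth turns a
   supersolution inequality for the profile into an upper bound on [mu]. *)
Lemma contact_eigen_bound (u ux uy uxx uyy : R -> R -> R) (Ph P P1 P2 : R -> R)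
    a b Om lam th bv mu t theta p1 p2 :
  partial_x u ux -> partial_y u uy -> partial_x ux uxx -> partial_y uy uyy ->
  0 < t -> a < Om * (p1 * p1 + p2 * p2) < b ->
  (forall w, a < w < b -> P w <= Ph w) ->
  (forall w, a < w < b -> derivable_pt_lim P w (P1 w)) ->
  (forall w, a < w < b -> derivable_pt_lim P1 w (P2 w)) ->
  (forall x y, t * Ph (Om * (x * x + y * y)) <= u x y) ->
  u p1 p2 = t * P (Om * (p1 * p1 + p2 * p2)) ->
  0 < P (Om * (p1 * p1 + p2 * p2)) ->
  - uxx p1 p2 - uyy p1 p2 + 2 * lam * cos th * ux p1 p2 + 2 * lam * sin th * uy p1 p2
    - bv * u p1 p2 = mu * u p1 p2 ->
  radial_op Om lam th bv (P (Om * (p1 * p1 + p2 * p2))) (P1 (Om * (p1 * p1 + p2 * p2)))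
    (P2 (Om * (p1 * p1 + p2 * p2))) p1 p2 <= - theta * Om * P (Om * (p1 * p1 + p2 * p2)) ->
  mu <= - theta * Om.
Proof.
  intros Hux Huy Huxx Huyy Ht Hab HPle HD1 HD2 Hge Hp Hpos Heq HL.
  set (wp := Om * (p1 * p1 + p2 * p2)) in *.
  destruct (cont2_radial Om p1 p2 (Rmin (wp - a) (b - wp))) as [del [Hdel Hc]];
    [apply Rmin_pos; lra|].
  assert (Hnear : forall x y, Rabs (x - p1) < del -> Rabs (y - p2) < del ->
            a < Om * (x * x + y * y) < b /\ t * P (Om * (x * x + y * y)) <= u x y).
  { intros x y Hx Hy; specialize (Hc x y Hx Hy); apply Rabs_def2 in Hc.
    pose proof (Rmin_l (wp - a) (b - wp)); pose proof (Rmin_r (wp - a) (b - wp)).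
    assert (Hw : a < Om * (x * x + y * y) < b) by (fold wp in Hc; lra).
    split; auto; apply Rle_trans with (t * Ph (Om * (x * x + y * y))); auto.
    apply Rmult_le_compat_l; [lra|auto]. }
  destruct (radial_contact_x P P1 P2 a b Om t HD1 HD2 u ux uxx p1 p2 del Hux Huxx Hdel Hnear Hp)
    as [X1 X2].
  destruct (radial_contact_y P P1 P2 a b Om t HD1 HD2 u uy uyy p1 p2 del Huy Huyy Hdel Hnear Hp)
    as [Y1 Y2].
  fold wp in X1, X2, Y1, Y2; unfold radial_op in HL.
  rewrite X1, Y1, Hp in Heq.
  apply Rmult_le_reg_r with (t * P wp); [now apply Rmult_lt_0_compat|].
  rewrite <- Heq; nra.
Qed.

Lemma drift_le Om k lam th g1 p1 p2 : 0 < Om -> 0 < k ->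
  2 * lam * cos th * (g1 * (2 * Om * p1)) + 2 * lam * sin th * (g1 * (2 * Om * p2))
  <= Rabs g1 * (4 * (lam * lam) * k + Om * (Om * (p1 * p1 + p2 * p2)) / k).
Proof.
  intros HO Hk.
  set (A := 2 * lam * cos th); set (B := 2 * lam * sin th).
  assert (HAB : A * A + B * B = 4 * (lam * lam)).
  { unfold A, B; pose proof (sin2_cos2 th); unfold Rsqr in H; nra. }
  set (s := A * p1 + B * p2); set (Q := k * k * (4 * (lam * lam)) + Om * Om * (p1 * p1 + p2 * p2)).
  (* AM-GM on both signs of [s] *)
  assert (K : 2 * k * Om * Rabs s <= Q).
  { unfold Q, s; rewrite <- HAB.
    pose proof (Rle_0_sqr (k * A - Om * p1)); pose proof (Rle_0_sqr (k * B - Om * p2)).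
    pose proof (Rle_0_sqr (k * A + Om * p1)); pose proof (Rle_0_sqr (k * B + Om * p2)).
    unfold Rsqr in *; destruct (Rle_dec 0 (A * p1 + B * p2));
      [rewrite Rabs_right by lra|rewrite Rabs_left by lra]; nra. }
  replace (A * (g1 * (2 * Om * p1)) + B * (g1 * (2 * Om * p2))) with (2 * Om * (g1 * s))
    by (unfold s; ring).
  replace (4 * (lam * lam) * k + Om * (Om * (p1 * p1 + p2 * p2)) / k) with (Q / k)
    by (unfold Q; field; lra).
  apply Rle_trans with (2 * Om * (Rabs g1 * Rabs s)).
  - rewrite <- Rabs_mult; apply Rmult_le_compat_l; [lra|apply Rle_abs].
  - apply Rmult_le_reg_r with k; [lra|].
    replace (Rabs g1 * (Q / k) * k) with (Rabs g1 * Q) by (field; lra).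
    pose proof (Rabs_pos g1); nra.
Qed.

(* Upper bound for [radial_op] in terms of [w = Om (p1^2 + p2^2)] only; the Laplacian of
   [G (Om r^2)] is [4 Om (w G'' + G')]. *)
Definition radial_bound Om lam bv k w g0 g1 g2 :=
  - 4 * Om * (w * g2 + g1) + Rabs g1 * (4 * (lam * lam) * k + Om * w / k) - bv * g0.

Lemma radial_op_le_bound Om k lam th bv g0 g1 g2 p1 p2 : 0 < Om -> 0 < k ->
  radial_op Om lam th bv g0 g1 g2 p1 p2
  <= radial_bound Om lam bv k (Om * (p1 * p1 + p2 * p2)) g0 g1 g2.
Proof.
  intros HO Hk; pose proof (drift_le Om k lam th g1 p1 p2 HO Hk).
  unfold radial_op, radial_bound.
  replace (g2 * (2 * Om * p1) * (2 * Om * p1)) with (4 * Om * (Om * p1 * p1) * g2) by ring.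
  replace (g2 * (2 * Om * p2) * (2 * Om * p2)) with (4 * Om * (Om * p2 * p2) * g2) by ring.
  replace (Om * (p1 * p1 + p2 * p2)) with (Om * p1 * p1 + Om * p2 * p2) in * by ring.
  lra.
Qed.

Section Supersolution.

Variables (w0 Om lam theta bv w : R).
Hypothesis Hw0 : 0 < w0 <= / 8.
Hypothesis HOm : 0 < Om.
Hypothesis Hlam : 4 * (lam * lam) <= Om * w0.
Hypothesis Htheta : 0 < theta.
Hypothesis Htheta_small : theta * (prof_log w0 + 1) <= / 2.
Hypothesis Hbv : 0 <= bv.
Hypothesis Hw : 0 <= w.

Lemma theta_prof_le g : g <= prof_log w0 + 1 -> theta * Om * g <= Om / 2.
Proof.
  intros Hg; replace (theta * Om * g) with (Om * (theta * g)) by ring.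
  apply Rle_trans with (Om * / 2); [|lra].
  apply Rmult_le_compat_l; [lra|].
  apply Rle_trans with (theta * (prof_log w0 + 1)); auto.
  apply Rmult_le_compat_l; lra.
Qed.

Lemma radial_bound_lin : w <= w0 -> 8 * Om / w0 <= bv * prof_log w0 ->
  radial_bound Om lam bv w0 w (prof_lin w0 w) (- / w0) 0 <= - theta * Om * prof_lin w0 w.
Proof.
  intros Hw0w Hb; pose proof (prof_log_w0_ge w0 Hw0).
  unfold radial_bound; rewrite Rabs_Ropp, Rabs_right by (left; apply Rinv_0_lt_compat; lra).
  set (q := prof_lin w0 w).
  assert (Hq : 0 <= w / w0 <= 1).
  { split; [apply Rmult_le_pos; [lra|left; apply Rinv_0_lt_compat; lra]|].
    apply Rmult_le_reg_r with w0; [lra|].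
    unfold Rdiv; rewrite Rmult_assoc, Rinv_l by lra; lra. }
  assert (prof_log w0 <= q <= prof_log w0 + 1) by (unfold q, prof_lin; lra).
  assert (theta * Om * q <= Om / 2) by (apply theta_prof_le; lra).
  assert (Hinv : 8 <= / w0).
  { rewrite <- (Rinv_inv 8); apply Rinv_le_contravar; lra. }
  replace (- 4 * Om * (w * 0 + - / w0) + / w0 * (4 * (lam * lam) * w0 + Om * w / w0) - bv * q)
    with (4 * Om * / w0 + 4 * (lam * lam) + Om * (w / w0) * / w0 - bv * q) by (field; lra).
  assert (Om * (w / w0) * / w0 <= Om * / w0).
  { apply Rmult_le_compat_r; [left; apply Rinv_0_lt_compat; lra|nra]. }
  assert (bv * prof_log w0 <= bv * q) by (apply Rmult_le_compat_l; lra).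
  unfold Rdiv in Hb; nra.
Qed.

Lemma radial_bound_log : w0 < w -> w <= / 4 ->
  radial_bound Om lam bv 1 w (prof_log w) (prof_log1 w) (prof_log2 w)
  <= - theta * Om * prof_log w.
Proof.
  intros Hw1 Hw2; pose proof (prof_log_w0_ge w0 Hw0).
  assert (Hg : / 8 <= prof_log w <= prof_log w0).
  { split; [rewrite <- prof_log_quarter|]; apply prof_log_decr; lra. }
  assert (theta * Om * prof_log w <= Om / 2) by (apply theta_prof_le; lra).
  unfold radial_bound.
  replace (w * prof_log2 w + prof_log1 w) with (/ 2) by (unfold prof_log1, prof_log2; field; lra).
  assert (Ha : Rabs (prof_log1 w) = / (2 * w) - / 2).
  { unfold prof_log1; assert (2 <= / (2 * w)); [|rewrite Rabs_left by lra; lra].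
    rewrite <- (Rinv_inv 2); apply Rinv_le_contravar; lra. }
  rewrite Ha.
  replace ((/ (2 * w) - / 2) * (4 * (lam * lam) * 1 + Om * w / 1))
    with (4 * (lam * lam) / (2 * w) - 2 * (lam * lam) + Om / 2 - Om * w / 2) by (field; lra).
  assert (4 * (lam * lam) / (2 * w) <= Om / 2).
  { apply Rmult_le_reg_r with (2 * w); [lra|].
    replace (4 * (lam * lam) / (2 * w) * (2 * w)) with (4 * (lam * lam)) by (field; lra); nra. }
  assert (0 <= bv * prof_log w) by nra.
  nra.
Qed.

Lemma radial_bound_exp : / 4 <= w ->
  radial_bound Om lam bv 1 w (prof_exp w) (- 8 * prof_exp w) (64 * prof_exp w)
  <= - theta * Om * prof_exp w.
Proof.
  intros Hw4; pose proof (prof_log_w0_ge w0 Hw0); pose proof (prof_exp_pos w).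
  unfold radial_bound; rewrite Rabs_left by lra.
  assert (theta <= 1) by nra.
  assert (4 * (lam * lam) <= Om) by nra.
  assert (0 <= bv * prof_exp w) by nra.
  replace (Om * w / 1) with (Om * w) by field.
  assert (- 4 * Om * (64 * w - 8) + 8 * (4 * (lam * lam) * 1 + Om * w) + theta * Om <= 0)
    by nra.
  nra.
Qed.

End Supersolution.

Lemma periodic_shift_Z (g : R -> R) L :
  (forall t, g (t + L) = g t) -> forall (k : Z) t, g (t - IZR k * L) = g t.
Proof.
  intros Hg k; induction k as [|k IH|k IH] using Z.peano_ind; intro t.
  - f_equal; ring.
  - rewrite succ_IZR, <- (IH t), <- Hg; f_equal; ring.
  - rewrite <- (IH t), <- (Hg (t - IZR k * L)), <- Z.sub_1_r, minus_IZR; f_equal; ring.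
Qed.

Lemma reduce_mod_period L x : 0 < L -> exists k : Z,
  - (L / 2) <= x - IZR k * L <= L / 2 /\ (x - IZR k * L) * (x - IZR k * L) <= x * x.
Proof.
  intros HL; destruct (archimed (x / L + / 2)) as [A1 A2].
  exists (up (x / L + / 2) - 1)%Z; rewrite minus_IZR.
  set (m := IZR (up (x / L + / 2))) in *.
  assert (E : x - (m - 1) * L = L * (x / L - (m - 1))) by (field; lra).
  assert (C : - (L / 2) <= x - (m - 1) * L <= L / 2) by (rewrite E; split; nra).
  split; [exact C|].
  assert (Hk : (up (x / L + / 2) - 1 = 0)%Z \/ (1 <= up (x / L + / 2) - 1)%Z
               \/ (up (x / L + / 2) - 1 <= -1)%Z) by lia.
  destruct Hk as [K|[K|K]]; [apply (f_equal IZR) in K|apply IZR_le in K|apply IZR_le in K];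
    rewrite minus_IZR in K; fold m in K; simpl in K.
  - replace (m - 1) with 0 by lra; nra.
  - assert (x / L >= / 2) by lra; assert (x >= L / 2); [|nra].
    replace x with (L * (x / L)) by (field; lra); nra.
  - assert (x / L <= - / 2) by lra; assert (x <= - (L / 2)); [|nra].
    replace x with (L * (x / L)) by (field; lra); nra.
Qed.

(* Reducing a point to the period cell leaves [u] unchanged and, [Phi] being decreasing,
   does not decrease [Phi(Om r^2)]. *)
Lemma cell_min_global (u : R -> R -> R) (Phi : R -> R) L1 L2 Om p1 p2 :
  0 < L1 -> 0 < L2 -> 0 <= Om -> periodic2 L1 L2 u -> (forall x y, 0 < u x y) ->
  (forall w, 0 < Phi w) -> (forall a b, a <= b -> Phi b <= Phi a) ->
  (forall x y, - (L1 / 2) <= x <= L1 / 2 -> - (L2 / 2) <= y <= L2 / 2 ->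
     u p1 p2 / Phi (Om * (p1 * p1 + p2 * p2)) <= u x y / Phi (Om * (x * x + y * y))) ->
  forall x y, u p1 p2 / Phi (Om * (p1 * p1 + p2 * p2)) <= u x y / Phi (Om * (x * x + y * y)).
Proof.
  intros H1 H2 HOm Hp Hu Hpos Hdecr Hmin x y.
  destruct (reduce_mod_period L1 x H1) as [k [Kx Sx]].
  destruct (reduce_mod_period L2 y H2) as [j [Ky Sy]].
  specialize (Hmin _ _ Kx Ky).
  rewrite (periodic_shift_Z (fun y => u (x - IZR k * L1) y) L2) in Hmin
    by (intro; apply Hp).
  rewrite (periodic_shift_Z (fun x => u x y) L1) in Hmin by (intro; apply Hp).
  eapply Rle_trans; [apply Hmin|].
  unfold Rdiv; apply Rmult_le_compat_l; [now apply Rlt_le|].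
  apply Rinv_le_contravar; [apply Hpos|apply Hdecr].
  apply Rmult_le_compat_l; lra.
Qed.

Lemma touch_from_below (u : R -> R -> R) (Phi : R -> R) L1 L2 Om :
  0 < L1 -> 0 < L2 -> 0 <= Om -> cont2 u -> periodic2 L1 L2 u ->
  (forall x y, 0 < u x y) -> (forall w, continuity_pt Phi w) ->
  (forall w, 0 < Phi w) -> (forall a b, a <= b -> Phi b <= Phi a) ->
  exists t p1 p2, 0 < t /\
    - (L1 / 2) <= p1 <= L1 / 2 /\ - (L2 / 2) <= p2 <= L2 / 2 /\
    u p1 p2 = t * Phi (Om * (p1 * p1 + p2 * p2)) /\
    forall x y, t * Phi (Om * (x * x + y * y)) <= u x y.
Proof.
  intros HL1 HL2 HOm Cu Hper Hu CPhi Hpos Hdecr.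
  set (F := fun x y => u x y / Phi (Om * (x * x + y * y))).
  assert (CF : cont2 F).
  { apply cont2_mult; auto; apply cont2_inv.
    - apply (cont2_comp Phi (fun x y => Om * (x * x + y * y))); auto; apply cont2_radial.
    - intros; apply Rgt_not_eq, Hpos. }
  destruct (cont2_attains_min_rect F (- (L1 / 2)) (L1 / 2) (- (L2 / 2)) (L2 / 2) CF
              ltac:(lra) ltac:(lra)) as [p1 [p2 [Hp1 [Hp2 Hmin]]]].
  pose proof (cell_min_global u Phi L1 L2 Om p1 p2 HL1 HL2 HOm Hper Hu Hpos Hdecr Hmin) as G.
  exists (F p1 p2), p1, p2; unfold F in *.
  pose proof (Hpos (Om * (p1 * p1 + p2 * p2))).
  split; [apply Rdiv_lt_0_compat; auto|].
  split; [auto|split; [auto|split; [field; lra|]]].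
  intros x y; specialize (G x y); pose proof (Hpos (Om * (x * x + y * y))).
  apply Rmult_le_reg_r with (/ Phi (Om * (x * x + y * y))); [now apply Rinv_0_lt_compat|].
  rewrite Rmult_assoc, Rinv_r, Rmult_1_r by lra; exact G.
Qed.

Section TouchingPoint.

Variables (lam th mu w0 Om theta t p1 p2 : R) (b u ux uy uxx uyy : R -> R -> R).
Hypothesis Hw0 : 0 < w0 <= / 8.
Hypothesis HOm : 0 < Om.
Hypothesis Hlam : 4 * (lam * lam) <= Om * w0.
Hypothesis Htheta : 0 < theta.
Hypothesis Htheta_small : theta * (prof_log w0 + 1) <= / 2.
Hypothesis Hb : 0 <= b p1 p2.
Hypothesis Hux : partial_x u ux.
Hypothesis Huy : partial_y u uy.
Hypothesis Huxx : partial_x ux uxx.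
Hypothesis Huyy : partial_y uy uyy.
Hypothesis Ht : 0 < t.
Hypothesis Hge : forall x y, t * profile w0 (Om * (x * x + y * y)) <= u x y.
Hypothesis Heq :
  - uxx p1 p2 - uyy p1 p2 + 2 * lam * cos th * ux p1 p2 + 2 * lam * sin th * uy p1 p2
  - b p1 p2 * u p1 p2 = mu * u p1 p2.

Let wp := Om * (p1 * p1 + p2 * p2).

Lemma touching_lin_le : wp <= w0 -> 8 * Om / w0 <= b p1 p2 * prof_log w0 ->
  u p1 p2 = t * prof_lin w0 wp -> mu <= - theta * Om.
Proof.
  intros Hwp Hcore Hpv; pose proof (prof_log_w0_ge w0 Hw0).
  assert (0 <= wp) by (unfold wp; nra).
  apply (contact_eigen_bound u ux uy uxx uyy (profile w0) (prof_lin w0)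
           (fun _ => - / w0) (fun _ => 0) (-1) (/ 4) Om lam th (b p1 p2) mu t theta p1 p2);
    auto; fold wp; try lra.
  - intros w Hw; unfold profile; destruct (Rle_dec w w0); [lra|].
    destruct (Rle_dec w (/ 4)); [|lra]; apply prof_lin_le_log; lra.
  - intros; apply dlim_prof_lin; lra.
  - intros; apply derivable_pt_lim_const.
  - pose proof (profile_pos w0 Hw0 wp) as Hp; unfold profile in Hp.
    destruct (Rle_dec wp w0); [auto|lra].
  - eapply Rle_trans; [apply radial_op_le_bound with (k := w0); lra|].
    apply radial_bound_lin; auto.
Qed.

Lemma touching_log_le : w0 < wp <= / 4 -> u p1 p2 = t * prof_log wp -> mu <= - theta * Om.
Proof.
  intros Hwp Hpv; pose proof (prof_log_w0_ge w0 Hw0).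
  apply (contact_eigen_bound u ux uy uxx uyy (profile w0) prof_log prof_log1 prof_log2
           w0 (/ 3) Om lam th (b p1 p2) mu t theta p1 p2); auto; fold wp; try lra.
  - intros w Hw; unfold profile; destruct (Rle_dec w w0); [lra|].
    destruct (Rle_dec w (/ 4)); [lra|]; apply prof_log_le_exp; lra.
  - intros; apply dlim_prof_log; lra.
  - intros; apply dlim_prof_log1; lra.
  - pose proof (prof_log_decr wp (/ 4) ltac:(lra) ltac:(lra) ltac:(lra)).
    rewrite prof_log_quarter in *; lra.
  - eapply Rle_trans; [apply radial_op_le_bound with (k := 1); lra|].
    apply (radial_bound_log w0); auto; lra.
Qed.

Lemma touching_exp_le : / 4 < wp -> u p1 p2 = t * prof_exp wp -> mu <= - theta * Om.
Proof.
  intros Hwp Hpv.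
  apply (contact_eigen_bound u ux uy uxx uyy (profile w0) prof_exp
           (fun w => - 8 * prof_exp w) (fun w => 64 * prof_exp w)
           (/ 4) (wp + 1) Om lam th (b p1 p2) mu t theta p1 p2); auto; fold wp; try lra.
  - intros w Hw; unfold profile; destruct (Rle_dec w w0); [lra|].
    destruct (Rle_dec w (/ 4)); lra.
  - intros; apply dlim_prof_exp.
  - intros; apply dlim_prof_exp1.
  - apply prof_exp_pos.
  - eapply Rle_trans; [apply radial_op_le_bound with (k := 1); lra|].
    apply (radial_bound_exp w0); auto; nra.
Qed.

End TouchingPoint.

Lemma principal_eig_le L1 L2 lam th (b : R -> R -> R) mu w0 Om theta :
  0 < L1 -> 0 < L2 -> 0 < w0 <= / 8 -> 0 < Om -> 4 * (lam * lam) <= Om * w0 ->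
  0 < theta -> theta * (prof_log w0 + 1) <= / 2 -> (forall x y, 0 <= b x y) ->
  (forall x y, - (L1 / 2) <= x <= L1 / 2 -> - (L2 / 2) <= y <= L2 / 2 ->
     Om * (x * x + y * y) <= w0 -> 8 * Om / w0 <= b x y * prof_log w0) ->
  is_principal_eig L1 L2 lam th b mu -> mu <= - theta * Om.
Proof.
  intros HL1 HL2 Hw0 HOm Hlam Hth Hth2 Hb Hcore Heig.
  destruct Heig as [u [ux [uy [uxx [uxy [uyx [uyy [Hux [Huy [Huxx [_ [_ [Huyy
    [Cu [_ [_ [_ [_ [_ [_ [Hper [Hpos Heq]]]]]]]]]]]]]]]]]]]]]].
  destruct (touch_from_below u (profile w0) L1 L2 Om HL1 HL2 ltac:(lra) Cu Hper Hpos
              (profile_continuous w0 Hw0) (profile_pos w0 Hw0) (profile_decr w0 Hw0))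
    as [t [p1 [p2 [Ht [Hp1 [Hp2 [Hpv Hge]]]]]]].
  unfold profile in Hpv.
  destruct (Rle_dec (Om * (p1 * p1 + p2 * p2)) w0) as [C1|C1];
    [|destruct (Rle_dec (Om * (p1 * p1 + p2 * p2)) (/ 4)) as [C2|C2]].
  - eapply touching_lin_le with (u := u); eauto.
  - eapply touching_log_le with (u := u); eauto; lra.
  - eapply touching_exp_le with (u := u); eauto; lra.
Qed.

Lemma Rdiv_le_of_le_mul a c L : 0 < L -> a <= c * L -> a / L <= c.
Proof.
  intros; apply Rmult_le_reg_r with L; auto.
  replace (a / L * L) with a by (field; lra); lra.
Qed.

Lemma Rle_div_of_mul_le a c L : 0 < L -> c * L <= a -> c <= a / L.
Proof.
  intros; apply Rmult_le_reg_r with L; auto.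
  replace (a / L * L) with a by (field; lra); lra.
Qed.

Lemma bernoulli_ineq h n : -1 <= h -> 1 + INR n * h <= (1 + h) ^ n.
Proof.
  intros Hh; induction n as [|n IH]; [simpl; lra|].
  rewrite S_INR; simpl.
  assert ((1 + INR n * h) * (1 + h) <= (1 + h) ^ n * (1 + h))
    by (apply Rmult_le_compat_r; lra).
  pose proof (pos_INR n); nra.
Qed.

Lemma sin_sq_le_sq x : sin x * sin x <= x * x.
Proof.
  pose proof (SIN_bound x); pose proof PI_RGT_0; pose proof PI2_1.
  destruct (Rle_dec 1 (Rabs x)).
  - assert (1 <= x * x); [|nra].
    destruct (Rle_dec 0 x); [rewrite Rabs_right in r by lra|rewrite Rabs_left in r by lra]; nra.
  - destruct (Rtotal_order x 0) as [Hx|[->|Hx]].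
    + rewrite Rabs_left in n by lra.
      pose proof (sin_gt_x x Hx); pose proof (sin_lt_0_var x ltac:(lra) Hx); nra.
    + rewrite sin_0; lra.
    + rewrite Rabs_right in n by lra.
      pose proof (sin_lt_x x Hx); pose proof (sin_gt_0 x Hx ltac:(lra)); nra.
Qed.

Lemma cos_sq_ge_1_sub_sq x : 1 - x * x <= cos x * cos x.
Proof. pose proof (sin_sq_le_sq x); pose proof (sin2_cos2 x); unfold Rsqr in *; lra. Qed.

Lemma x_cos_le_sin x : 0 <= x <= PI / 2 -> x * cos x <= sin x.
Proof.
  intros Hx; destruct (Req_dec x 0) as [->|Hn]; [rewrite sin_0; lra|].
  destruct (MVT_cor2 (fun t => sin t - t * cos t) (fun t => t * sin t) 0 x)
    as [c [Hc Hcr]]; [lra| |].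
  { intros c Hc; apply dlim_eq with (cos c - (1 * cos c + c * (- sin c))); [|ring].
    apply dlim_minus; [apply derivable_pt_lim_sin|].
    apply (dlim_mult (fun t => t) cos); [apply derivable_pt_lim_id|apply derivable_pt_lim_cos]. }
  rewrite sin_0, cos_0 in Hc.
  assert (0 <= sin c) by (apply sin_ge_0; pose proof PI_RGT_0; lra).
  assert (0 <= c * sin c * (x - 0)) by (apply Rmult_le_pos; [apply Rmult_le_pos|]; lra).
  lra.
Qed.

Lemma cos_sq_mul_le1 x : - (PI / 2) <= x <= PI / 2 -> cos x * cos x * (1 + x * x) <= 1.
Proof.
  assert (Hpos : forall x, 0 <= x <= PI / 2 -> cos x * cos x * (1 + x * x) <= 1).
  { intros z Hz; pose proof (x_cos_le_sin z Hz).
    assert (0 <= cos z) by (apply cos_ge_0; lra).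
    assert (z * cos z * (z * cos z) <= sin z * sin z)
      by (apply Rmult_le_compat; try apply Rmult_le_pos; lra).
    pose proof (sin2_cos2 z); unfold Rsqr in *; nra. }
  intros Hx; destruct (Rle_dec 0 x); [apply Hpos; lra|].
  rewrite <- cos_neg; replace (x * x) with (- x * - x) by ring; apply Hpos; lra.
Qed.

Lemma cos_sq_pow_le N x : - (PI / 2) <= x <= PI / 2 ->
  (cos x * cos x) ^ N <= / (1 + INR N * (x * x)).
Proof.
  intros Hx; pose proof (cos_sq_mul_le1 x Hx) as C.
  assert (P : 0 < 1 + x * x) by nra.
  assert (C2 : cos x * cos x <= / (1 + x * x)).
  { apply Rmult_le_reg_r with (1 + x * x); auto; rewrite Rinv_l; lra. }
  assert (C3 : (cos x * cos x) ^ N <= (/ (1 + x * x)) ^ N)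
    by (apply pow_incr; split; [apply Rle_0_sqr|auto]).
  rewrite pow_inv in C3.
  pose proof (bernoulli_ineq (x * x) N ltac:(nra)).
  assert (0 < 1 + INR N * (x * x)) by (pose proof (pos_INR N); nra).
  apply Rle_trans with (/ (1 + x * x) ^ N); auto.
  apply Rinv_le_contravar; auto.
Qed.

Definition bump1 (L : R) (N : nat) (t : R) := (cos (PI * t / L) * cos (PI * t / L)) ^ N.

Definition bump1_deriv (L : R) (N : nat) (t : R) :=
  INR N * (cos (PI * t / L) * cos (PI * t / L)) ^ pred N *
  (- 2 * (PI / L) * sin (PI * t / L) * cos (PI * t / L)).

Lemma bump1_nonneg L N t : 0 <= bump1 L N t.
Proof. apply pow_le, Rle_0_sqr. Qed.

Lemma bump1_le1 L N t : bump1 L N t <= 1.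
Proof.
  unfold bump1; rewrite <- (pow1 N); apply pow_incr.
  pose proof (sin2_cos2 (PI * t / L)); unfold Rsqr in *; split; [apply Rle_0_sqr|nra].
Qed.

Lemma bump1_periodic L N t : 0 < L -> bump1 L N (t + L) = bump1 L N t.
Proof.
  intros; unfold bump1; replace (PI * (t + L) / L) with (PI * t / L + PI) by (field; lra).
  rewrite neg_cos; f_equal; ring.
Qed.

Lemma bump1_ge_half L N t : (1 <= N)%nat ->
  INR N * ((PI * t / L) * (PI * t / L)) <= / 2 -> / 2 <= bump1 L N t.
Proof.
  intros HN H; unfold bump1; set (x := PI * t / L) in *.
  assert (1 <= INR N) by (apply (le_INR 1); auto).
  assert (x * x <= / 2) by nra.
  pose proof (bernoulli_ineq (- (x * x)) N ltac:(lra)).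
  assert ((1 + - (x * x)) ^ N <= (cos x * cos x) ^ N); [|lra].
  apply pow_incr; pose proof (cos_sq_ge_1_sub_sq x); lra.
Qed.

Lemma dlim_bump1 L N t : derivable_pt_lim (bump1 L N) t (bump1_deriv L N t).
Proof.
  assert (Hc : forall t, derivable_pt_lim (fun t => cos (PI * t / L)) t
                           (- sin (PI * t / L) * (PI / L))).
  { intro s; apply (dlim_comp cos (fun t => PI * t / L)); [|apply derivable_pt_lim_cos].
    apply derivable_pt_lim_ext with (fun t => (PI / L) * t + 0);
      [intro; unfold Rdiv; ring|apply dlim_affine]. }
  unfold bump1, bump1_deriv.
  apply dlim_eq with (INR N * (cos (PI * t / L) * cos (PI * t / L)) ^ pred N *
    ((- sin (PI * t / L) * (PI / L)) * cos (PI * t / L)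
     + cos (PI * t / L) * (- sin (PI * t / L) * (PI / L)))); [|ring].
  apply (dlim_comp (fun y => y ^ N) (fun t => cos (PI * t / L) * cos (PI * t / L)));
    [apply (dlim_mult (fun t => cos (PI * t / L)) (fun t => cos (PI * t / L))); apply Hc
    |apply derivable_pt_lim_pow].
Qed.

Lemma bump1_continuous L N t : continuity_pt (bump1 L N) t.
Proof. exact (derivable_continuous_pt _ _ (exist _ _ (dlim_bump1 L N t))). Qed.

Lemma bump1_deriv_continuous L N t : continuity_pt (bump1_deriv L N) t.
Proof. unfold bump1_deriv; reg. Qed.

Lemma continuous_Riemann_integrable f a b :
  (forall x, continuity_pt f x) -> Riemann_integrable f a b.
Proof.
  intros Hf; destruct (Rle_dec a b).
  - apply continuity_implies_RiemannInt; auto.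
  - apply RiemannInt_P1, continuity_implies_RiemannInt; [lra|auto].
Qed.

Definition bump1_integrable L N : Riemann_integrable (bump1 L N) 0 L :=
  continuous_Riemann_integrable _ 0 L (bump1_continuous L N).

Definition bump1_mass L N := RiemannInt (bump1_integrable L N).

Lemma bump1_le_lorentz L N x : 0 < L -> 0 <= x <= L ->
  bump1 L N x <= / (1 + INR N * ((PI * x / L) * (PI * x / L)))
               + / (1 + INR N * ((PI * x / L - PI) * (PI * x / L - PI))).
Proof.
  intros HL Hx; pose proof PI_RGT_0; pose proof (pos_INR N).
  assert (P1 : 0 < / (1 + INR N * ((PI * x / L) * (PI * x / L)))).
  { apply Rinv_0_lt_compat; pose proof (Rle_0_sqr (PI * x / L)); unfold Rsqr in *; nra. }
  assert (P2 : 0 < / (1 + INR N * ((PI * x / L - PI) * (PI * x / L - PI)))).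
  { apply Rinv_0_lt_compat; pose proof (Rle_0_sqr (PI * x / L - PI)); unfold Rsqr in *; nra. }
  assert (0 <= PI * x / L) by (apply Rle_div_of_mul_le; nra).
  assert (PI * x / L <= PI) by (apply Rdiv_le_of_le_mul; nra).
  unfold bump1; destruct (Rle_dec x (L / 2)).
  - assert (PI * x / L <= PI / 2) by (apply Rdiv_le_of_le_mul; nra).
    pose proof (cos_sq_pow_le N (PI * x / L) ltac:(lra)); lra.
  - assert (PI / 2 <= PI * x / L) by (apply Rle_div_of_mul_le; nra).
    pose proof (cos_sq_pow_le N (PI * x / L - PI) ltac:(lra)).
    replace (cos (PI * x / L)) with (- cos (PI * x / L - PI))
      by (rewrite <- neg_cos; f_equal; ring).
    replace (- cos (PI * x / L - PI) * - cos (PI * x / L - PI))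
      with (cos (PI * x / L - PI) * cos (PI * x / L - PI)) by ring.
    lra.
Qed.

(* The Lorentzian bound of [bump1_le_lorentz] integrates explicitly via [atan]. *)
Lemma bump1_mass_le L N : 0 < L -> (1 <= N)%nat -> bump1_mass L N <= L / sqrt (INR N).
Proof.
  intros HL HN.
  assert (HN' : 1 <= INR N) by (apply (le_INR 1); auto).
  set (s := sqrt (INR N)).
  assert (Hs : 0 < s) by (apply sqrt_lt_R0; lra).
  assert (Hs2 : s * s = INR N) by (apply sqrt_sqrt; lra).
  pose proof PI_RGT_0.
  set (a := s * PI / L).
  assert (Ha : 0 < a) by (unfold a; apply Rdiv_lt_0_compat; nra).
  set (F := fun x => / a * (atan (a * x + 0) + atan (a * x + - (a * L)))).
  set (g := fun x => / (1 + (a * x + 0) ^ 2) + / (1 + (a * x + - (a * L)) ^ 2)).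
  assert (Hpos : forall z, 1 + z ^ 2 <> 0) by (intro; apply Rgt_not_eq, plus_Rsqr_gt_0).
  assert (DF : forall x, derivable_pt_lim F x (g x)).
  { intro x; unfold F, g.
    apply dlim_eq with (/ a * (/ (1 + (a * x + 0) ^ 2) * a + / (1 + (a * x + - (a * L)) ^ 2) * a));
      [|field; repeat split; auto; lra].
    apply dlim_scal, dlim_plus;
      (apply (dlim_comp atan); [apply dlim_affine|apply derivable_pt_lim_atan]). }
  set (FC := @mkC1 F (fun x => exist _ (g x) (DF x))
               ltac:(intro x; unfold derive, derive_pt, g; simpl; reg; apply Hpos)).
  pose proof (RiemannInt_P32 FC 0 L) as pr.
  assert (Le : bump1_mass L N <= RiemannInt pr).
  { apply RiemannInt_P19; [lra|]; intros x Hx.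
    change (derive FC (diff0 FC) x) with (g x); unfold g.
    replace ((a * x + 0) ^ 2) with (INR N * ((PI * x / L) * (PI * x / L)))
      by (unfold a; rewrite <- Hs2; field; lra).
    replace ((a * x + - (a * L)) ^ 2) with (INR N * ((PI * x / L - PI) * (PI * x / L - PI)))
      by (unfold a; rewrite <- Hs2; field; lra).
    apply bump1_le_lorentz; lra. }
  rewrite (FTC_Riemann FC pr) in Le; simpl in Le; unfold F in Le.
  replace (a * L + 0) with (a * L) in Le by ring;
    replace (a * L + - (a * L)) with 0 in Le by ring;
    replace (a * 0 + 0) with 0 in Le by ring;
    replace (a * 0 + - (a * L)) with (- (a * L)) in Le by ring.
  rewrite atan_opp, atan_0 in Le.
  destruct (atan_bound (a * L)) as [_ Hb].
  assert (/ a * PI = L / s) by (unfold a; field; lra).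
  assert (/ a * (2 * atan (a * L)) < / a * PI)
    by (apply Rmult_lt_compat_l; [apply Rinv_0_lt_compat|]; lra).
  fold s; lra.
Qed.

Lemma bump1_mass_pos L N : 0 < L -> (1 <= N)%nat -> 0 < bump1_mass L N.
Proof.
  intros HL HN.
  assert (HN' : 1 <= INR N) by (apply (le_INR 1); auto).
  pose proof PI_RGT_0; pose proof PI2_1.
  set (d := L / (2 * PI * INR N)).
  assert (Hd : 0 < d) by (unfold d; apply Rdiv_lt_0_compat; nra).
  assert (1 <= 2 * PI * INR N) by nra.
  assert (HdL : d <= L) by (apply Rdiv_le_of_le_mul; nra).
  pose proof (continuous_Riemann_integrable _ 0 d (bump1_continuous L N)) as pr1.
  pose proof (continuous_Riemann_integrable _ d L (bump1_continuous L N)) as pr2.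
  unfold bump1_mass; rewrite <- (RiemannInt_P26 pr1 pr2).
  assert (A : / 2 * (d - 0) <= RiemannInt pr1).
  { apply (RiemannInt_const_bound (u := 1) pr1); [lra|]; intros x Hx.
    split; [|apply bump1_le1].
    apply bump1_ge_half; auto.
    assert (Hx' : 0 <= PI * x / L <= / (2 * INR N)).
    { split; [apply Rle_div_of_mul_le; nra|apply Rdiv_le_of_le_mul; [lra|]].
      unfold d in Hx; replace (/ (2 * INR N) * L) with (PI * (L / (2 * PI * INR N)))
        by (field; lra); nra. }
    assert (INR N * (/ (2 * INR N) * / (2 * INR N)) <= / 2).
    { replace (INR N * (/ (2 * INR N) * / (2 * INR N))) with (/ 4 * / INR N) by (field; lra).
      assert (/ INR N <= 1) by (rewrite <- Rinv_1; apply Rinv_le_contravar; lra); lra. }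
    assert (PI * x / L * (PI * x / L) <= / (2 * INR N) * / (2 * INR N))
      by (apply Rmult_le_compat; lra).
    nra. }
  assert (B : 0 <= RiemannInt pr2).
  { pose proof (RiemannInt_const_bound (l := 0) (u := 1) pr2 HdL) as Hb.
    destruct Hb as [Hb _]; [intros; split; [apply bump1_nonneg|apply bump1_le1]|lra]. }
  lra.
Qed.

Lemma RiemannInt_scal_eq f a b k (pr : Riemann_integrable f a b)
  (pr2 : Riemann_integrable (fun x => k * f x) a b) :
  a <= b -> RiemannInt pr2 = k * RiemannInt pr.
Proof.
  intros Hab; pose proof (RiemannInt_P10 k (RiemannInt_P14 a b 0) pr) as pr3.
  rewrite (RiemannInt_P18 pr2 pr3 Hab) by (intros; unfold fct_cte; ring).
  rewrite (RiemannInt_P13 (RiemannInt_P14 a b 0) pr pr3), RiemannInt_P15; ring.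
Qed.

Definition bump_coef L1 L2 alpha N := alpha * L1 * L2 / (bump1_mass L1 N * bump1_mass L2 N).
Definition bump L1 L2 alpha N (x y : R) := bump_coef L1 L2 alpha N * bump1 L1 N x * bump1 L2 N y.

Lemma bump_in_Lambda L1 L2 alpha N : 0 < L1 -> 0 < L2 -> (1 <= N)%nat -> 0 <= alpha ->
  in_Lambda L1 L2 alpha (bump L1 L2 alpha N).
Proof.
  intros HL1 HL2 HN Ha.
  set (B := bump_coef L1 L2 alpha N).
  pose proof (bump1_mass_pos L1 N HL1 HN); pose proof (bump1_mass_pos L2 N HL2 HN).
  assert (Hcont : forall f g, (forall t, continuity_pt f t) -> (forall t, continuity_pt g t) ->
            cont2 (fun x y => B * f x * g y)).
  { intros f g Hf Hg.
    apply cont2_mult; [apply cont2_mult; [apply cont2_const|]|];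
      [apply cont2_fst|apply cont2_snd]; auto. }
  split; [|split; [|split]].
  - split; [apply Hcont; apply bump1_continuous|].
    exists (fun x y => B * bump1_deriv L1 N x * bump1 L2 N y),
           (fun x y => B * bump1 L1 N x * bump1_deriv L2 N y).
    split; [|split; [|split]].
    + intros x y; apply (derivable_pt_lim_scal_right (fun t => B * bump1 L1 N t)).
      apply dlim_scal, dlim_bump1.
    + intros x y; apply dlim_scal, dlim_bump1.
    + apply Hcont; [apply bump1_deriv_continuous|apply bump1_continuous].
    + apply Hcont; [apply bump1_continuous|apply bump1_deriv_continuous].
  - intros x y; unfold bump; pose proof (bump1_nonneg L1 N x); pose proof (bump1_nonneg L2 N y).
    assert (0 <= B).
    { unfold B, bump_coef; apply Rle_div_of_mul_le; [now apply Rmult_lt_0_compat|].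
      rewrite Rmult_0_l; apply Rmult_le_pos; [apply Rmult_le_pos|]; lra. }
    fold B; apply Rmult_le_pos; [apply Rmult_le_pos|]; auto.
  - intros x y; unfold bump; rewrite !bump1_periodic; auto.
  - exists (fun x => (B * bump1_mass L2 N) * bump1 L1 N x); split.
    + intro x; exists (Riemann_integrable_scal (B * bump1 L1 N x) (bump1_integrable L2 N)).
      transitivity (B * bump1 L1 N x * bump1_mass L2 N); [|ring].
      apply RiemannInt_scal_eq; lra.
    + exists (Riemann_integrable_scal (B * bump1_mass L2 N) (bump1_integrable L1 N)).
      transitivity (B * bump1_mass L2 N * bump1_mass L1 N);
        [apply RiemannInt_scal_eq; lra|].
      unfold B, bump_coef; field; split; lra.
Qed.

Lemma bump_coef_ge L1 L2 alpha N : 0 < L1 -> 0 < L2 -> (1 <= N)%nat -> 0 < alpha ->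
  alpha * INR N <= bump_coef L1 L2 alpha N.
Proof.
  intros HL1 HL2 HN Ha.
  assert (HN' : 1 <= INR N) by (apply (le_INR 1); auto).
  pose proof (bump1_mass_pos L1 N HL1 HN); pose proof (bump1_mass_pos L2 N HL2 HN).
  pose proof (bump1_mass_le L1 N HL1 HN); pose proof (bump1_mass_le L2 N HL2 HN).
  set (s := sqrt (INR N)) in *.
  assert (Hs : 0 < s) by (apply sqrt_lt_R0; lra).
  assert (Hs2 : s * s = INR N) by (apply sqrt_sqrt; lra).
  assert (P : bump1_mass L1 N * bump1_mass L2 N <= L1 * L2 / INR N).
  { rewrite <- Hs2; replace (L1 * L2 / (s * s)) with ((L1 / s) * (L2 / s)) by (field; lra).
    apply Rmult_le_compat; lra. }
  unfold bump_coef; apply Rle_div_of_mul_le; [nra|].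
  apply Rle_trans with (alpha * INR N * (L1 * L2 / INR N)); [apply Rmult_le_compat_l; nra|].
  right; field; lra.
Qed.

(* Both [bump1] factors are at least [1/2] on this disc. *)
Lemma bump_ge_on_disc L1 L2 alpha N x y : 0 < L1 -> 0 < L2 -> (1 <= N)%nat -> 0 < alpha ->
  INR N * (PI * PI) * (x * x + y * y) * 2 <= Rmin L1 L2 * Rmin L1 L2 ->
  alpha * INR N / 4 <= bump L1 L2 alpha N x y.
Proof.
  intros HL1 HL2 HN Ha Hxy.
  assert (HN' : 1 <= INR N) by (apply (le_INR 1); auto).
  pose proof PI_RGT_0; pose proof (Rmin_l L1 L2); pose proof (Rmin_r L1 L2).
  pose proof (Rmin_pos L1 L2 HL1 HL2).
  assert (Hhalf : forall L t, 0 < L -> Rmin L1 L2 <= L ->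
            INR N * (PI * PI) * (t * t) * 2 <= Rmin L1 L2 * Rmin L1 L2 -> / 2 <= bump1 L N t).
  { intros L t HL Hl Ht; apply bump1_ge_half; auto.
    replace (INR N * (PI * t / L * (PI * t / L))) with (INR N * (PI * PI) * (t * t) / (L * L))
      by (field; lra).
    apply Rdiv_le_of_le_mul; nra. }
  assert (Hsq : forall t, 0 <= INR N * (PI * PI) * (t * t) * 2).
  { intro t; assert (0 <= INR N * (PI * PI)) by (apply Rmult_le_pos; [apply pos_INR|nra]).
    apply Rmult_le_pos; [apply Rmult_le_pos; [auto|apply Rle_0_sqr]|lra]. }
  pose proof (Hsq x); pose proof (Hsq y).
  pose proof (Hhalf L1 x HL1 ltac:(lra) ltac:(lra)); pose proof (Hhalf L2 y HL2 ltac:(lra) ltac:(lra)).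
  pose proof (bump_coef_ge L1 L2 alpha N HL1 HL2 HN Ha).
  unfold bump; set (B := bump_coef L1 L2 alpha N) in *.
  assert (0 <= alpha * INR N) by (apply Rmult_le_pos; lra).
  assert (alpha * INR N / 2 <= B * bump1 L1 N x).
  { apply Rle_trans with (alpha * INR N * bump1 L1 N x); [nra|].
    apply Rmult_le_compat_r; [apply bump1_nonneg|lra]. }
  apply Rle_trans with (alpha * INR N / 2 * bump1 L2 N y); [nra|].
  apply Rmult_le_compat_r; [apply bump1_nonneg|lra].
Qed.

Lemma prof_log_unbounded K : exists w0, 0 < w0 <= / 8 /\ K <= prof_log w0.
Proof.
  set (T := Rmax K 0 + 2).
  assert (HT : 2 <= T /\ K + 1 <= T) by (unfold T; pose proof (Rmax_l K 0); pose proof (Rmax_r K 0); lra).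
  exists (exp (- (2 * T))); split; [split; [apply exp_pos|]|].
  - assert (3 <= exp 2) by (pose proof (exp_ineq1_le 2); lra).
    assert (8 <= exp 4) by (replace 4 with (2 + 2) by ring; rewrite exp_plus; nra).
    assert (exp 4 <= exp (2 * T)).
    { destruct (Req_dec 4 (2 * T)) as [->|]; [lra|left; apply exp_increasing; lra]. }
    rewrite exp_Ropp; apply Rinv_le_contravar; lra.
  - unfold prof_log; rewrite ln_exp.
    assert (ln 2 < 1).
    { rewrite <- (ln_exp 1); apply ln_increasing; [lra|].
      pose proof (exp_ineq1 1 ltac:(lra)); lra. }
    pose proof (exp_pos (- (2 * T))); lra.
Qed.

Lemma eventually_mul_INR_ge a K : 0 < a -> exists N0, forall n, (N0 <= n)%nat -> K <= a * INR n.
Proof.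
  intros Ha; exists (Z.to_nat (up (K / a))); intros n Hn.
  replace K with (a * (K / a)) by (field; lra); apply Rmult_le_compat_l; [lra|].
  destruct (archimed (K / a)) as [A _].
  apply Rle_trans with (INR (Z.to_nat (up (K / a)))); [|apply le_INR; lia].
  destruct (Z_le_gt_dec 0 (up (K / a))).
  - rewrite INR_IZR_INZ, Z2Nat.id by auto; lra.
  - assert (IZR (up (K / a)) < 0) by (apply IZR_lt; lia).
    pose proof (pos_INR (Z.to_nat (up (K / a)))); lra.
Qed.

(* [Om_N = 2 PI^2 w0 N / l^2] is chosen so that the disc [Om_N r^2 <= w0] is exactly the one
   of [bump_ge_on_disc]. *)
Lemma bump_principal_eig_le L1 L2 alpha w0 N lam th mu :
  0 < L1 -> 0 < L2 -> 0 < alpha -> (1 <= N)%nat -> 0 < w0 <= / 8 ->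
  64 * (PI * PI) / (alpha * (Rmin L1 L2 * Rmin L1 L2)) <= prof_log w0 ->
  4 * (lam * lam) <= 2 * (PI * PI) * w0 / (Rmin L1 L2 * Rmin L1 L2) * INR N * w0 ->
  is_principal_eig L1 L2 lam th (bump L1 L2 alpha N) mu ->
  mu <= - / (2 * (prof_log w0 + 1)) * (2 * (PI * PI) * w0 / (Rmin L1 L2 * Rmin L1 L2) * INR N).
Proof.
  intros HL1 HL2 Ha HN Hw0 Hlog Hlam Heig.
  set (l := Rmin L1 L2) in *; assert (Hl : 0 < l) by (now apply Rmin_pos).
  pose proof PI_RGT_0; pose proof (prof_log_w0_ge w0 Hw0).
  assert (HN1 : 1 <= INR N) by (apply (le_INR 1); lia).
  set (c := 2 * (PI * PI) * w0 / (l * l)) in *.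
  assert (Hc : 0 < c) by (unfold c; apply Rdiv_lt_0_compat; [apply Rmult_lt_0_compat|]; nra).
  apply (principal_eig_le L1 L2 lam th (bump L1 L2 alpha N) mu w0 (c * INR N)); auto; try nra.
  - apply Rinv_0_lt_compat; lra.
  - right; field; lra.
  - intros x y; apply (bump_in_Lambda L1 L2 alpha N); auto; lra.
  - intros x y _ _ Hxy.
    assert (Hdisc : INR N * (PI * PI) * (x * x + y * y) * 2 <= l * l).
    { replace (INR N * (PI * PI) * (x * x + y * y) * 2)
        with (c * INR N * (x * x + y * y) * (l * l) / w0) by (unfold c; field; lra).
      apply Rdiv_le_of_le_mul; [lra|]; rewrite (Rmult_comm (l * l)).
      apply Rmult_le_compat_r; nra. }
    pose proof (bump_ge_on_disc L1 L2 alpha N x y HL1 HL2 HN Ha Hdisc).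
    apply Rle_trans with (alpha * INR N / 4 * prof_log w0); [|apply Rmult_le_compat_r; lra].
    replace (8 * (c * INR N) / w0)
      with (alpha * INR N / 4 * (64 * (PI * PI) / (alpha * (l * l))))
      by (unfold c; field; repeat split; lra).
    apply Rmult_le_compat_l; [nra|auto].
Qed.

Theorem mainTheorem10 :
  forall L1 L2 alpha : R, 0 < L1 -> 0 < L2 -> 0 < alpha ->
  exists bs : nat -> R -> R -> R,
    (forall n, in_Lambda L1 L2 alpha (bs n)) /\
    forall lo hi M : R, exists N : nat, forall n : nat, (N <= n)%nat ->
      forall lam th : R, lo <= lam <= hi -> 0 <= th < 2 * PI ->
        forall mu : R, is_principal_eig L1 L2 lam th (bs n) mu -> mu <= - M.
Proof.
  intros L1 L2 alpha HL1 HL2 Ha.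
  set (l := Rmin L1 L2); assert (Hl : 0 < l) by (now apply Rmin_pos).
  destruct (prof_log_unbounded (64 * (PI * PI) / (alpha * (l * l)))) as [w0 [Hw0 Hlog]].
  set (theta := / (2 * (prof_log w0 + 1))).
  set (c := 2 * (PI * PI) * w0 / (l * l)).
  assert (Hth : 0 < theta) by (pose proof (prof_log_w0_ge w0 Hw0); apply Rinv_0_lt_compat; lra).
  assert (Hc : 0 < c)
    by (pose proof PI_RGT_0; unfold c; apply Rdiv_lt_0_compat; [apply Rmult_lt_0_compat|]; nra).
  exists (fun n => bump L1 L2 alpha (S n)); split.
  { intro n; apply bump_in_Lambda; auto; [lia|lra]. }
  intros lo hi M.
  destruct (eventually_mul_INR_ge (c * w0) (4 * (lo * lo + hi * hi))) as [N1 HN1]; [nra|].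
  destruct (eventually_mul_INR_ge (theta * c) M) as [N2 HN2]; [nra|].
  exists (max N1 N2); intros n Hn lam th Hlam _ mu Heig.
  specialize (HN1 (S n) ltac:(lia)); specialize (HN2 (S n) ltac:(lia)).
  assert (lam * lam <= lo * lo + hi * hi) by (destruct Hlam; destruct (Rle_dec 0 lam); nra).
  enough (mu <= - theta * (c * INR (S n))) by lra.
  apply (bump_principal_eig_le L1 L2 alpha w0 (S n) lam th mu); auto; [lia|fold l c; nra].
Qed.
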